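(* For every $n\ge 4$, if $G\sim G(n,1/2)$ then $\mathbb{P}(G\text{ is not even-degenerate})\ge (1/2)^{2n-3}$.
   Context: $G(n,1/2)$ is the uniformly random graph on $n$ labelled vertices. A graph $G$ on $n$ vertices is even-degenerate if there is an ordering $v_1,\dots,v_n$ of its vertices such that for each $1\le i\le n-2$, $v_i$ has an even number of neighbours in $\{v_{i+1},\dots,v_n\}$. *)

From HB Require Import structures.
From mathcomp Require Import all_boot all_order all_algebra all_fingroup.
Set Implicit Arguments. Unset Strict Implicit. Unset Printing Implicit Defensive.

(* A simple graph on the labelled vertex set 'I_n is encoded by its edge set:
   a set of ordered pairs (u, v) with u < v (one pair per unordered edge). *)
Definition graphs (n : nat) : {set {set 'I_n * 'I_n}} :=
  [set G : {set 'I_n * 'I_n} | [forall p in G, (p.1 < p.2)%N]].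

Definition adj (n : nat) (G : {set 'I_n * 'I_n}) (u v : 'I_n) : bool :=
  ((u, v) \in G) || ((v, u) \in G).

(* Even-degenerate: there is an ordering v_0, ..., v_{n-1} (given by the
   permutation s, v_i = s i) such that for every position i <= n-3
   (i.e. the paper's 1 <= i <= n-2), v_i has an even number of neighbours
   among v_{i+1}, ..., v_{n-1}. *)
Definition even_degenerate (n : nat) (G : {set 'I_n * 'I_n}) : bool :=
  [exists s : {perm 'I_n},
    [forall i : 'I_n, (i < n - 2)%N ==>
       ~~ odd #|[set j : 'I_n | (i < j)%N && adj G (s i) (s j)]| ]].

Definition prob_not_even_degenerate (n : nat) : rat :=
  (#|[set G in graphs n | ~~ even_degenerate G]|%:R / #|graphs n|%:R)%R.

From HB Require Import structures.
From mathcomp Require Import all_boot all_order all_algebra all_fingroup.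
From mathcomp Require Import zify.
Import GRing.Theory Num.Theory.
Set Implicit Arguments. Unset Strict Implicit. Unset Printing Implicit Defensive.

(* If a graph has all degrees odd, except possibly for one isolated vertex w,
   then no ordering works: the first vertex of an ordering must have even
   degree, so it is w; as w is isolated, the second vertex must have even
   degree as well, so it is w again.  For n = m + 2 such graphs are obtained
   from an arbitrary graph H on the first m vertices by joining a hub vertex
   to every vertex of even degree in H, and joining the hub to the last
   vertex exactly when this is needed to make the hub's degree odd (the
   handshake lemma fixes the parity of the number of even-degree vertices).
   This gives 2^(C(m,2)) distinct bad graphs among 2^(C(m+2,2)) graphs, and
   C(m+2,2) - C(m,2) = 2n - 3. *)

Definition pairs n : {set 'I_n * 'I_n} := [set p : 'I_n * 'I_n | (p.1 < p.2)%N].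

Definition nbrs n (G : {set 'I_n * 'I_n}) (u : 'I_n) : {set 'I_n} := [set v | adj G u v].

Definition deg n (G : {set 'I_n * 'I_n}) (u : 'I_n) : nat := #|nbrs G u|.

Lemma graphsE n : graphs n = powerset (pairs n).
Proof.
apply/setP => G; rewrite !inE; apply/forallP/subsetP => [lt_G p Gp | sub_G p].
  by rewrite inE; exact: implyP (lt_G p) Gp.
by apply/implyP => /sub_G; rewrite inE.
Qed.

Lemma adjC n (G : {set 'I_n * 'I_n}) u v : adj G u v = adj G v u.
Proof. by rewrite /adj orbC. Qed.

Lemma adj_irr n (G : {set 'I_n * 'I_n}) u : G \in graphs n -> adj G u u = false.
Proof.
rewrite graphsE inE /adj orbb => /subsetP sub_G.
by apply/negbTE/negP => /sub_G; rewrite inE ltnn.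
Qed.

Lemma card_adj_perm n (G : {set 'I_n * 'I_n}) (s : {perm 'I_n}) u :
  #|[set j | adj G u (s j)]| = deg G u.
Proof.
rewrite /deg -(card_preimset (nbrs G u) (@perm_inj _ s)).
by apply: eq_card => j; rewrite !inE.
Qed.

Lemma card_later_adj n (G : {set 'I_n * 'I_n}) (s : {perm 'I_n}) (i : 'I_n) :
  G \in graphs n -> (forall j : 'I_n, (j < i)%N -> ~~ adj G (s i) (s j)) ->
  #|[set j : 'I_n | (i < j)%N && adj G (s i) (s j)]| = deg G (s i).
Proof.
move=> G_graph no_earlier; rewrite -(card_adj_perm G s).
apply: eq_card => j; rewrite !inE.
case: (ltngtP i j) => [//| /no_earlier /negbTE -> //| /val_inj ->].
by rewrite adj_irr.
Qed.

Lemma not_even_degenerate n (G : {set 'I_n * 'I_n}) (w : 'I_n) :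
  (4 <= n)%N -> G \in graphs n ->
  (forall u, ~~ odd (deg G u) -> u = w /\ forall v, ~~ adj G u v) ->
  ~~ even_degenerate G.
Proof.
move=> n_ge4 G_graph even_iso; apply/existsP => -[s /forallP s_even].
have lt0n : (0 < n)%N by lia.
have lt1n : (1 < n)%N by lia.
pose i0 := Ordinal lt0n; pose i1 := Ordinal lt1n.
have [s0w s0_iso] : s i0 = w /\ forall v, ~~ adj G (s i0) v.
  apply: even_iso; rewrite -(@card_later_adj _ _ s i0 G_graph) //.
  by apply: (implyP (s_even i0)) => /=; lia.
have [s1w _] : s i1 = w /\ forall v, ~~ adj G (s i1) v.
  apply: even_iso; rewrite -(@card_later_adj _ _ s i1 G_graph).
    by apply: (implyP (s_even i1)) => /=; lia.
  move=> j; rewrite ltnS leqn0 => /eqP j0.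
  by rewrite adjC (_ : j = i0); [exact: s0_iso | apply: val_inj].
by have /perm_inj/(congr1 val) := etrans s0w (esym s1w).
Qed.

Lemma odd_sum (I : finType) (f : I -> nat) :
  odd (\sum_i f i) = odd #|[set i | odd (f i)]|.
Proof.
rewrite -sum1_card [in RHS]big_mkcond /=.
apply: (big_ind2 (fun x y => odd x = odd y)) => [//| x1 x2 y1 y2 e1 e2 | i _].
  by rewrite !oddD e1 e2.
by rewrite inE; case: (odd (f i)).
Qed.

Lemma handshake n (G : {set 'I_n * 'I_n}) :
  G \in graphs n -> ~~ odd #|[set u | odd (deg G u)]|.
Proof.
rewrite graphsE inE => /subsetP sub_G; rewrite -odd_sum.
have -> : \sum_u deg G u =
    \sum_u \sum_v ((u, v) \in G : nat) + \sum_u \sum_v ((v, u) \in G : nat).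
  rewrite -big_split; apply: eq_bigr => u _ /=.
  rewrite /deg /nbrs -sum1_card big_mkcond -big_split; apply: eq_bigr => v _ /=.
  rewrite inE /adj; case uvG: ((u, v) \in G); case vuG: ((v, u) \in G) => //.
  by have := sub_G _ uvG; have := sub_G _ vuG; rewrite !inE /=; lia.
by rewrite [X in _ + X]exchange_big addnn odd_double.
Qed.

Lemma card_ord_lt n m : (m <= n)%N -> #|[set i : 'I_n | (i < m)%N]| = m.
Proof.
move=> le_mn; rewrite -sum1dep_card -[RHS]card_ord -sum1_card.
by rewrite (big_ord_widen _ (fun=> 1%N) le_mn).
Qed.

Section Completion.

Variable m : nat.
Local Notation N := m.+2.

Definition low : {set 'I_N * 'I_N} := [set p : 'I_N * 'I_N | (p.1 < p.2 < m)%N].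

Definition hub : 'I_N := Ordinal (leqW (ltnSn m)).

Definition even_low (H : {set 'I_N * 'I_N}) : {set 'I_N} :=
  [set u : 'I_N | (u < m)%N && ~~ odd (deg H u)].

Definition completion (H : {set 'I_N * 'I_N}) : {set 'I_N * 'I_N} :=
  [set p | [|| p \in H, (p.2 == hub) && (p.1 \in even_low H)
            | ~~ odd m && (p == (hub, ord_max))]].

Variable H : {set 'I_N * 'I_N}.
Hypothesis H_low : H \subset low.

Lemma low_graph : H \in graphs N.
Proof.
rewrite graphsE inE; apply: subset_trans H_low _.
by apply/subsetP => p; rewrite !inE => /andP[].
Qed.

Lemma adj_low_ge (u v : 'I_N) : (m <= u)%N -> adj H u v = false.
Proof.
move=> le_mu; apply/negbTE/negP.
by rewrite /adj => /orP[] /(subsetP H_low); rewrite inE /=; lia.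
Qed.

Lemma even_low_lt (u : 'I_N) : u \in even_low H -> (u < m)%N.
Proof. by rewrite inE => /andP[]. Qed.

Lemma odd_card_even_low : odd #|even_low H| = odd m.
Proof.
have E_lows : even_low H \subset [set u : 'I_N | (u < m)%N].
  by apply/subsetP => u /even_low_lt; rewrite inE.
have odd_E : [set u | odd (deg H u)] = [set u : 'I_N | (u < m)%N] :\: even_low H.
  apply/setP => u; rewrite !inE; case: (ltnP u m) => [_ | le_mu] /=.
    by rewrite andbT negbK.
  by rewrite /deg (eq_card0 (_ : _ =i pred0)) // => v; rewrite inE adj_low_ge.
have card_lows := card_ord_lt (leqW (leqnSn m)).
have := handshake low_graph; rewrite odd_E cardsD (setIidPr E_lows) card_lows.
have := subset_leq_card E_lows; rewrite card_lows => le_Em.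
by rewrite oddB // => /negPf; case: (odd m); case: odd.
Qed.

Lemma hub_neq_max : (hub == ord_max) = false.
Proof. by rewrite -val_eqE /= (ltn_eqF (ltnSn m)). Qed.

Lemma completion_graph : completion H \in graphs N.
Proof.
rewrite graphsE inE; apply/subsetP => -[u v]; rewrite !inE /= xpair_eqE.
case/or3P => [/(subsetP H_low) | /andP[/eqP-> E_u] | /and3P[_ /eqP-> /eqP->]].
- by rewrite inE => /andP[].
- by case/andP: E_u.
- exact: (ltnSn m).
Qed.

Lemma completion_low : completion H :&: low = H.
Proof.
apply/setP => -[u v]; rewrite inE; case Huv: ((u, v) \in H).
  by rewrite (subsetP H_low) // inE Huv.
rewrite !inE Huv xpair_eqE /=; apply/negbTE/negP.
by case/and3P=> /orP[/and3P[/eqP-> _ _] | /and3P[_ /eqP-> /eqP->]] /=; lia.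
Qed.

Lemma mem_completion (u v : 'I_N) : ((u, v) \in completion H) =
  [|| (u, v) \in H, (v == hub) && (u \in even_low H)
    | [&& ~~ odd m, u == hub & v == ord_max]].
Proof. by rewrite /completion in_set xpair_eqE. Qed.

Lemma nbrs_completion_low (u : 'I_N) : (u < m)%N ->
  nbrs (completion H) u = if u \in even_low H then hub |: nbrs H u else nbrs H u.
Proof.
move=> lt_um.
have [u_hub u_max] : (u == hub) = false /\ (u == ord_max) = false.
  by split; apply/negbTE; rewrite -val_eqE /= neq_ltn ?lt_um // ltnW.
apply/setP => v; rewrite [in LHS]in_set /adj !mem_completion u_hub u_max /= !andbF !orbF.
by case: ifP => _; rewrite ?in_setU1 in_set /adj ?andbT ?andbF ?orbF // orbAC orbC.
Qed.

Lemma nbrs_completion_hub :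
  nbrs (completion H) hub = if odd m then even_low H else ord_max |: even_low H.
Proof.
have hub_E : (hub \in even_low H) = false by apply/negP => /even_low_lt; rewrite ltnn.
apply/setP => v.
have /norP[/negbTE hv /negbTE vh] := negbT (@adj_low_ge hub v (leqnn m)).
rewrite in_set /adj !mem_completion hv vh hub_E eqxx /= hub_neq_max !andbF orbF /=.
by case: (odd m); rewrite ?in_setU1 // orbC.
Qed.

Lemma nbrs_completion_max :
  nbrs (completion H) ord_max = if odd m then set0 else [set hub].
Proof.
have max_E : (ord_max \in even_low H) = false.
  by apply/negP => /even_low_lt; rewrite ltnNge leqnSn.
apply/setP => v.
have /norP[/negbTE hv /negbTE vh] := negbT (@adj_low_ge ord_max v (leqnSn m)).
rewrite in_set /adj !mem_completion hv vh max_E (eq_sym ord_max) hub_neq_max eqxx.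
rewrite /= !andbF andbT.
by case: (odd m); rewrite ?inE.
Qed.

Lemma completion_even_deg (u : 'I_N) : ~~ odd (deg (completion H) u) ->
  u = ord_max /\ forall v, ~~ adj (completion H) u v.
Proof.
have even_lowE w : (w \in even_low H) = (w < m)%N && ~~ odd (deg H w) by rewrite inE.
have max_E : ord_max \notin even_low H by rewrite even_lowE ltnNge leqnSn.
have : [|| (u < m)%N, u == hub | u == ord_max].
  by rewrite -!val_eqE /=; have := ltn_ord u; lia.
case/or3P => [lt_um | /eqP-> | /eqP->].
- rewrite /deg nbrs_completion_low // even_lowE lt_um /=.
  case: ifPn => [even_u | /negPn -> //].
  have hub_nbr : hub \notin nbrs H u by rewrite inE adjC (@adj_low_ge hub u (leqnn m)).
  by rewrite cardsU1 hub_nbr /= negbK -/(deg H u) (negPf even_u).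
- rewrite /deg nbrs_completion_hub.
  by case odd_m: (odd m); rewrite ?cardsU1 ?max_E /= odd_card_even_low odd_m.
- move=> even_max; split=> // v; apply/negP => adj_v.
  have : v \in nbrs (completion H) ord_max by rewrite inE.
  move: even_max; rewrite /deg nbrs_completion_max.
  by case: (odd m); rewrite ?inE ?cards1.
Qed.

End Completion.

Lemma card_pairs_not_low m : (#|pairs m.+2 :\: low m| <= (2 * m).+1)%N.
Proof.
pose to_vertex (w : 'I_m.+2) k := [set (x, w) | x in [set x : 'I_m.+2 | (x < k)%N]].
have card_to_vertex w k : (k <= m.+2)%N -> (#|to_vertex w k| <= k)%N.
  by move=> le_k; rewrite -{2}(card_ord_lt le_k) leq_imset_card.
have cover : pairs m.+2 :\: low m \subset to_vertex (hub m) m :|: to_vertex ord_max m.+1.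
  apply/subsetP => -[x y]; rewrite !inE /= => /andP[not_low lt_xy].
  have : (y == m :> nat) || (y == m.+1 :> nat) by have := ltn_ord y; lia.
  case/orP=> /eqP y_val; apply/orP; [left | right]; apply/imsetP; exists x;
    rewrite ?inE ?xpair_eqE ?eqxx ?andbT //; try lia; by congr pair; apply: val_inj.
apply: leq_trans (subset_leq_card cover) _; apply: leq_trans (leq_card_setU _ _) _.
by rewrite mul2n -addnn -addnS leq_add // card_to_vertex // ltnW.
Qed.

Lemma card_not_even_degenerate m : (4 <= m.+2)%N ->
  (2 ^ #|low m| <= #|[set G in graphs m.+2 | ~~ even_degenerate G]|)%N.
Proof.
move=> n_ge4; rewrite -card_powerset.
have inj : {in powerset (low m) &, injective (@completion m)}.
  move=> H1 H2; rewrite !inE => H1_low H2_low eq_completion.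
  by rewrite -(completion_low H1_low) -(completion_low H2_low) eq_completion.
rewrite -(card_in_imset inj); apply/subset_leq_card/subsetP => G /imsetP[H].
rewrite inE => H_low ->; rewrite inE completion_graph //=.
apply: (not_even_degenerate (w := ord_max)) => //; first exact: completion_graph.
exact: completion_even_deg.
Qed.

Lemma half_expn_le_ratio (R : numFieldType) (a b e c : nat) :
  (b <= e)%N -> (2 ^ a <= c)%N -> ((1 / 2 : R) ^+ e <= c%:R / (2 ^ (a + b))%:R)%R.
Proof.
move=> le_be le_c; apply: (Order.POrderTheory.le_trans (y := ((1 / 2 : R) ^+ b)%R)).
  by apply: ler_wiXn2l; rewrite // mul1r ?invr_ge0 ?ler0n // invf_le1 ?ler1n.
have -> : ((1 / 2 : R) ^+ b = (2 ^ a)%:R / (2 ^ (a + b))%:R)%R.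
  rewrite expnD natrM !natrX invfM mulrA divff ?mul1r ?exprVn //.
  by rewrite expf_neq0 // pnatr_eq0.
by rewrite ler_wpM2r ?invr_ge0 ?ler0n ?ler_nat.
Qed.

Theorem mainTheorem5 (n : nat) (hn : (4 <= n)%N) :
  ((1 / 2 : rat) ^+ (2 * n - 3) <= prob_not_even_degenerate n)%R.
Proof.
case: n hn => [|[|m]] // hn.
have low_pairs : low m \subset pairs m.+2 by apply/subsetP => p; rewrite !inE => /andP[].
have card_graphs : #|graphs m.+2| = 2 ^ (#|low m| + #|pairs m.+2 :\: low m|).
  by rewrite graphsE card_powerset -(cardsID (low m)) (setIidPr low_pairs).
rewrite /prob_not_even_degenerate card_graphs.
apply: half_expn_le_ratio; last exact: card_not_even_degenerate.
by apply: leq_trans (card_pairs_not_low m) _; lia.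
Qed.
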